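(* Let $\alpha\in\mathbb{R}\setminus\pi\mathbb{Z}$, put $a=\cot\alpha$ and $w=a+i$ (so $\bar w=a-i$). For $n\ge 1$ let $C_n=aJ_n+B_n\in M_n(\mathbb{C})$, i.e. the matrix with all diagonal entries $a$, all entries above the diagonal $a+i$ and all entries below the diagonal $a-i$. Let $\chi_n(\alpha;\lambda)=\det(\lambda I_n-C_n)$ and $\chi_0(\alpha;\lambda)=1$. Then for $n\ge 2$ $$\chi_n(\alpha;\lambda)=(2\lambda-2a+w+\bar w)\,\chi_{n-1}(\alpha;\lambda)-(\lambda-a+w)(\lambda-a+\bar w)\,\chi_{n-2}(\alpha;\lambda),$$ and for $n\ge 1$ and real $\lambda$ $$\chi_n(\alpha;\lambda)=\frac{(\cot\alpha+i)(\lambda-i)^n-(\cot\alpha-i)(\lambda+i)^n}{2i}=\operatorname{Im}\big((\cot\alpha+i)(\lambda-i)^n\big).$$ The eigenvalues of $C_n$ are $\lambda_k=\cot\frac{\alpha+k\pi}{n}$, $0\le k\le n-1$; that is, $\chi_n(\alpha;\lambda)=\prod_{k=0}^{n-1}\big(\lambda-\cot\frac{\alpha+k\pi}{n}\big)$.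
   Context: $J_n$ denotes the $n\times n$ matrix all of whose entries equal $1$. $B_n=i\,M$ where $M$ is the $n\times n$ matrix with zero diagonal, all entries above the diagonal equal to $1$ and all entries below the diagonal equal to $-1$. *)

From HB Require Import structures.
From mathcomp Require Import all_boot all_order all_algebra.
From mathcomp Require Import all_classical all_reals.
From mathcomp Require Import trigo.
From mathcomp Require Import complex.
Set Implicit Arguments. Unset Strict Implicit. Unset Printing Implicit Defensive.
Import Order.TTheory GRing.Theory Num.Theory.
Local Open Scope ring_scope.
Local Open Scope complex_scope.

Definition cot (R : realType) (x : R) : R := cos x / sin x.

Definition Cmat (R : realType) (n : nat) (a : R) : 'M[R[i]]_n :=
  \matrix_(p < n, q < n)
    (if p == q then a%:C
     else if (p < q)%N then a%:C + 'i else a%:C - 'i).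

(* chi_n(alpha; lambda) = det(lambda I_n - C_n), with a = cot alpha.
   For n = 0 the determinant of the empty matrix is 1, matching chi_0 = 1. *)
Definition chi (R : realType) (n : nat) (alpha : R) (lam : R[i]) : R[i] :=
  \det (lam%:M - Cmat n (cot alpha)).

From HB Require Import structures.
From mathcomp Require Import all_boot all_order all_algebra.
From mathcomp Require Import all_classical all_reals.
From mathcomp Require Import trigo.
From mathcomp Require Import complex.
From mathcomp Require Import ring.
Set Implicit Arguments. Unset Strict Implicit. Unset Printing Implicit Defensive.
Import Order.TTheory GRing.Theory Num.Theory.
Local Open Scope ring_scope.
Local Open Scope complex_scope.

(* The determinant of lam I - C_n + t J_n is an affine function of t: subtracting
   the first row from the others removes t from all rows but the first, where
   the determinant is linear.  For t = a + i the matrix is lower triangular with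
   diagonal lam + i, for t = a - i upper triangular with diagonal lam - i, and
   eliminating the unknown slope gives
     2i chi_n(lam) = (a + i)(lam - i)^n - (a - i)(lam + i)^n.  Since
   sin x (cot x + i) = e^(ix) and sin x (cot x - i) = e^(-ix), the right-hand
   side vanishes at lam = cot theta whenever sin (n theta - alpha) = 0, so the
   n distinct numbers cot ((alpha + k pi) / n) are all the roots of the monic
   polynomial chi_n. *)

Section DetAddConstMx.
Variables (F : comNzRingType) (m : nat).
Local Notation n := m.+1.

Definition row0_elim_mx : 'M[F]_n :=
  1%:M - (\col_i (i != ord0)%:R) *m delta_mx 0 ord0.

Lemma row0_elim_mxE (Y : 'M[F]_n) i j :
  (row0_elim_mx *m Y) i j = Y i j - (i != ord0)%:R * Y ord0 j.
Proof. by rewrite mulmxBl mul1mx -mulmxA -rowE !mxE big_ord1 !mxE. Qed.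

Lemma det_row0_elim_mx : \det row0_elim_mx = 1.
Proof.
have entryE i j : row0_elim_mx i j = (i == j)%:R - (i != ord0)%:R * (j == ord0)%:R.
  by rewrite !mxE big_ord1 !mxE eqxx.
rewrite det_trig; last first.
  apply/is_trig_mxP => i j lt_ij; rewrite entryE.
  have -> : (i == j) = false by apply/negbTE; rewrite neq_ltn lt_ij.
  have -> : (j == ord0) = false by apply/negbTE; rewrite -lt0n (leq_ltn_trans _ lt_ij).
  by rewrite mulr0 subrr.
by rewrite big1 // => i _; rewrite entryE eqxx; case: eqP; rewrite ?mulr0 ?mul0r subr0.
Qed.

Lemma det_add_const_mx (X : 'M[F]_n) :
  exists K, forall t, \det (X + const_mx t) = \det X + t * K.
Proof.
have lift0 (i : 'I_m) : (lift ord0 i != ord0) = true by rewrite eq_sym neq_lift.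
pose Y := row0_elim_mx *m X.
have YE i j : Y i j = X i j - (i != ord0)%:R * X ord0 j := row0_elim_mxE X i j.
have <- : \det Y = \det X by rewrite det_mulmx det_row0_elim_mx mul1r.
clearbody Y; pose C : 'M[F]_n := \matrix_(i, j) if i == ord0 then 1 else Y i j.
exists (\det C) => t.
pose Z := row0_elim_mx *m (X + const_mx t).
have ZE i j : Z i j = X i j + t - (i != ord0)%:R * (X ord0 j + t).
  by rewrite row0_elim_mxE !mxE.
have <- : \det Z = \det (X + const_mx t) by rewrite det_mulmx det_row0_elim_mx mul1r.
clearbody Z; rewrite -[\det Y]mul1r; apply: (determinant_multilinear (i0 := ord0)).
- by apply/rowP => j; rewrite !mxE ZE YE eqxx /=; ring.
- by apply/matrixP => i j; rewrite !mxE ZE YE lift0 /=; ring.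
- by apply/matrixP => i j; rewrite !mxE (negbTE (lift0 i)) ZE YE lift0 /=; ring.
Qed.

End DetAddConstMx.

Lemma horner_char_poly (F : comNzRingType) n (A : 'M[F]_n) x :
  (char_poly A).[x] = \det (x%:M - A).
Proof.
rewrite /char_poly /char_poly_mx -horner_evalE -det_map_mx; congr (\det _).
by apply/matrixP => i j; rewrite !mxE rmorphB rmorphMn /= !horner_evalE hornerX hornerC.
Qed.

Section CmatDet.
Variable R : realType.
Implicit Types (a : R) (lam : R[i]).

Lemma det_sub_Cmat_add_const_addi n a lam :
  \det (lam%:M - Cmat n a + const_mx (a%:C + 'i)) = (lam + 'i) ^+ n.
Proof.
rewrite det_trig; last first.
  apply/is_trig_mxP => i j lt_ij; rewrite !mxE lt_ij.
  have -> : (i == j) = false by apply/negbTE; rewrite neq_ltn lt_ij.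
  by rewrite /=; ring.
rewrite -[n in RHS]card_ord -prodr_const; apply: eq_bigr => i _.
by rewrite !mxE eqxx /=; ring.
Qed.

Lemma det_sub_Cmat_add_const_subi n a lam :
  \det (lam%:M - Cmat n a + const_mx (a%:C - 'i)) = (lam - 'i) ^+ n.
Proof.
rewrite -det_tr det_trig; last first.
  apply/is_trig_mxP => i j lt_ij; rewrite !mxE ltnNge (ltnW lt_ij).
  have -> : (j == i) = false by apply/negbTE; rewrite neq_ltn lt_ij orbT.
  by rewrite /=; ring.
rewrite -[n in RHS]card_ord -prodr_const; apply: eq_bigr => i _.
by rewrite !mxE eqxx /=; ring.
Qed.

Lemma det_sub_Cmat n a lam :
  \det (lam%:M - Cmat n a) * (2 * 'i) =
  (a%:C + 'i) * (lam - 'i) ^+ n - (a%:C - 'i) * (lam + 'i) ^+ n.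
Proof.
case: n => [|n]; first by rewrite det_mx00 !expr0; ring.
have [K detK] := det_add_const_mx (lam%:M - Cmat n.+1 a).
rewrite -(det_sub_Cmat_add_const_addi _ a) -(det_sub_Cmat_add_const_subi _ a).
by rewrite !detK; ring.
Qed.

End CmatDet.

Section ChiClosedForm.
Variable R : realType.
Implicit Types (alpha : R) (lam : R[i]).

Lemma two_i_neq0 : 2 * 'i != 0 :> R[i].
Proof. by rewrite mulf_neq0 ?pnatr_eq0 // eq_complex /= oner_eq0 andbF. Qed.

Lemma chiE n alpha lam :
  chi n alpha lam =
  (((cot alpha)%:C + 'i) * (lam - 'i) ^+ n - ((cot alpha)%:C - 'i) * (lam + 'i) ^+ n)
    / (2 * 'i).
Proof. by apply: (mulIf two_i_neq0); rewrite divfK ?two_i_neq0 // det_sub_Cmat. Qed.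

Lemma chiSS n alpha lam :
  chi n.+2 alpha lam =
  2 * lam * chi n.+1 alpha lam - (lam + 'i) * (lam - 'i) * chi n alpha lam.
Proof. by rewrite !chiE !exprS; ring. Qed.

Lemma ImJ_div2i (z : R[i]) : (complex.Im z)%:C = (z - z^*) / (2 * 'i).
Proof.
apply: (mulIf two_i_neq0); rewrite divfK ?two_i_neq0 // ImJ_sub.
by rewrite mulrACA divfK ?pnatr_eq0 // -expr2 sqr_i mulrN1 opprB.
Qed.

Lemma chi_real n alpha (lam : R) :
  chi n alpha lam%:C = (complex.Im (((cot alpha)%:C + 'i) * (lam%:C - 'i) ^+ n))%:C.
Proof.
(* Hiding [cot alpha = cos alpha / sin alpha] keeps [rmorphM] on the conjugation. *)
rewrite chiE ImJ_div2i; set a := (cot alpha)%:C.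
rewrite rmorphM rmorphXn rmorphD rmorphB.
by congr ((_ - _ * _ ^+ _) / _); apply/eqP; rewrite eq_complex /= !oppr0 !addr0 ?opprK !eqxx.
Qed.

End ChiClosedForm.

Section Expi.
Variable R : realType.
Implicit Types x y : R.

Definition expi x : R[i] := cos x +i* sin x.

Lemma expiD x y : expi (x + y) = expi x * expi y.
Proof. by rewrite /expi cosD sinD /=; congr (_ +i* _); ring. Qed.

Lemma expiX x n : expi x ^+ n = expi (x *+ n).
Proof.
elim: n => [|n IH]; first by rewrite expr0 mulr0n /expi cos0 sin0.
by rewrite exprSr IH -expiD mulrSr.
Qed.

Lemma expiN_sin0 x : sin x = 0 -> expi (- x) = expi x.
Proof. by move=> sx0; rewrite /expi cosN sinN sx0 oppr0. Qed.

Lemma sin_cot_addi x : sin x != 0 -> (sin x)%:C * ((cot x)%:C + 'i) = expi x.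
Proof.
move=> sx0; apply/eqP; rewrite eq_complex /= /cot.
by apply/andP; split; apply/eqP; field.
Qed.

Lemma sin_cot_subi x : sin x != 0 -> (sin x)%:C * ((cot x)%:C - 'i) = expi (- x).
Proof.
move=> sx0; apply/eqP; rewrite eq_complex /= /cot cosN sinN.
by apply/andP; split; apply/eqP; field.
Qed.

Lemma cot_root (alpha theta : R) n :
    sin alpha != 0 -> sin theta != 0 -> sin (n%:R * theta - alpha) = 0 ->
  ((cot alpha)%:C + 'i) * ((cot theta)%:C - 'i) ^+ n =
  ((cot alpha)%:C - 'i) * ((cot theta)%:C + 'i) ^+ n.
Proof.
move=> sa0 st0; rewrite mulr_natl => s0.
have sin_neq0C x : sin x != 0 -> (sin x)%:C != 0 :> R[i].
  by move=> sx0; rewrite eq_complex /= negb_and sx0.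
have ACA (u v y z : R[i]) : u * v ^+ n * (y * z ^+ n) = (u * y) * (v * z) ^+ n.
  by rewrite exprMn mulrACA.
apply: (@mulfI _ ((sin alpha)%:C * (sin theta)%:C ^+ n)).
  by rewrite mulf_neq0 ?expf_neq0 ?sin_neq0C.
rewrite !ACA sin_cot_addi // sin_cot_subi // sin_cot_subi // sin_cot_addi //.
by rewrite !expiX -!expiD mulNrn -opprB expiN_sin0 // addrC.
Qed.

End Expi.

Section SinZeros.
Variable R : realType.
Implicit Types x y : R.

Lemma sin_natr_mulpi (k : nat) : sin (k%:R * pi) = 0 :> R.
Proof. by rewrite mulr_natl -[pi *+ k]add0r (alternatingn (@sinDpi R)) sin0 mulr0. Qed.

Lemma sin_intr_mulpi (k : int) : sin (k%:~R * pi) = 0 :> R.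
Proof.
by case: k => k; rewrite ?NegzE ?mulrNz ?mulNr ?sinN sin_natr_mulpi ?oppr0.
Qed.

Lemma sin_eq0_intpi x : sin x = 0 -> exists k : int, x = k%:~R * pi.
Proof.
move=> sx0; pose k := Num.floor (x / pi); exists k.
have pi_gt0 := @pi_gt0 R.
set y := x - k%:~R * pi.
have y_ge0 : 0 <= y by rewrite subr_ge0 -ler_pdivlMr // floor_le.
have y_ltpi : y < pi.
  rewrite ltrBlDl -[X in _ + X]mul1r -mulrDl -ltr_pdivrMr //.
  by rewrite -[1]/(1%:~R) -intrD floorD1_gt.
have cos_kpi : cos (k%:~R * pi) != 0 :> R.
  apply/eqP => c0; have := cos2Dsin2 (k%:~R * pi : R).
  by rewrite c0 sin_intr_mulpi expr0n addr0 => /esym/eqP; rewrite oner_eq0.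
have xE : x = y + k%:~R * pi by rewrite subrK.
have sy0 : sin y = 0.
  move: sx0; rewrite xE sinD sin_intr_mulpi mulr0 addr0 => /eqP.
  by rewrite mulf_eq0 (negbTE cos_kpi) orbF => /eqP.
move: y_ge0; rewrite le_eqVlt => /orP[/eqP y0 | y_gt0].
  by rewrite xE -y0 add0r.
by have := @sin_gt0_pi _ y; rewrite y_gt0 y_ltpi sy0 ltxx => /(_ isT).
Qed.

Lemma sin_neq0 x : (forall k : int, x != k%:~R * pi) -> sin x != 0.
Proof. by move=> x_npi; apply/eqP => /sin_eq0_intpi [k xk]; move/eqP: (x_npi k). Qed.

Lemma cot_eq_sinB x y :
  sin x != 0 -> sin y != 0 -> cot x = cot y -> sin (x - y) = 0.
Proof.
move=> sx0 sy0; rewrite /cot => /eqP; rewrite eqr_div // => /eqP cot_xy.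
by rewrite sinB mulrC -cot_xy subrr.
Qed.

End SinZeros.

Section CmatEigenvalues.
Variables (R : realType) (alpha : R) (n : nat).
Hypotheses (alpha_npi : forall k : int, alpha != k%:~R * pi) (n_gt0 : (0 < n)%N).
Local Notation theta k := ((alpha + k%:R * pi) / n%:R).

Let n_neq0 : n%:R != 0 :> R.
Proof. by rewrite pnatr_eq0 -lt0n. Qed.

Lemma sin_theta_neq0 (k : nat) : sin (theta k) != 0.
Proof.
apply: sin_neq0 => m; apply: contra_neq (alpha_npi (m * n%:Z - k%:Z)) => theta_m.
have -> : alpha = n%:R * theta k - k%:R * pi by rewrite mulrC divfK ?n_neq0 ?addrK.
by rewrite theta_m intrB intrM; ring.
Qed.

Lemma chi_cot_theta (k : nat) : chi n alpha (cot (theta k))%:C = 0.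
Proof.
rewrite chiE cot_root ?subrr ?mul0r ?sin_theta_neq0 ?sin_neq0 //.
by rewrite mulrC divfK ?n_neq0 // addrC addKr sin_natr_mulpi.
Qed.

Lemma cot_theta_inj : injective (fun k : 'I_n => cot (theta k)).
Proof.
have pi_gt0 := @pi_gt0 R.
suff lt_neq (j k : 'I_n) : (j < k)%N -> cot (theta k) != cot (theta j).
  move=> j k /= cot_jk; apply/val_inj.
  case: (ltngtP j k) => [jk|kj|//]; first by move: (lt_neq _ _ jk); rewrite cot_jk eqxx.
  by move: (lt_neq _ _ kj); rewrite cot_jk eqxx.
move=> lt_jk; apply/eqP => /cot_eq_sinB; rewrite !sin_theta_neq0 => /(_ isT isT).
have -> : theta k - theta j = (k - j)%:R * pi / n%:R.
  by rewrite natrB 1?ltnW // -mulrBl; congr (_ * _); ring.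
apply/eqP; rewrite gt_eqF // sin_gt0_pi //; apply/andP; split.
  by rewrite divr_gt0 ?mulr_gt0 ?ltr0n ?subn_gt0.
rewrite ltr_pdivrMr ?ltr0n // mulrC ltr_pM2l // ltr_nat.
exact: leq_ltn_trans (leq_subr _ _) (ltn_ord k).
Qed.

Lemma chi_prod lam :
  chi n alpha lam = \prod_(k < n) (lam - (cot (theta k))%:C).
Proof.
pose rs := [seq (cot (theta k))%:C | k : 'I_n <- index_enum 'I_n].
have size_rs : size rs = n by rewrite size_map [index_enum _]unlock -enumT size_enum_ord.
have char_rs : char_poly (Cmat n (cot alpha)) = \prod_(z <- rs) ('X - z%:P).
  rewrite [LHS](all_roots_prod_XsubC (rs := rs)) ?size_char_poly ?size_rs //.
  - by rewrite (monicP (char_poly_monic _)) scale1r.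
  - by apply/allP => _ /mapP[k _ ->]; rewrite rootE horner_char_poly; apply/eqP/chi_cot_theta.
  rewrite uniq_rootsE map_inj_uniq ?index_enum_uniq // => j k /complexI.
  exact: cot_theta_inj.
rewrite /chi -horner_char_poly char_rs horner_prod big_map.
by apply: eq_bigr => k _; rewrite hornerXsubC.
Qed.

End CmatEigenvalues.

Theorem lemma2p1 (R : realType) (alpha : R)
    (halpha : forall k : int, alpha != k%:~R * pi) :
  let a : R := cot alpha in
  let w : R[i] := a%:C + 'i in
  (forall (n : nat) (lam : R[i]), (2 <= n)%N ->
     chi n alpha lam =
       (2 * lam - 2 * a%:C + w + w^*) * chi n.-1 alpha lam
       - (lam - a%:C + w) * (lam - a%:C + w^*) * chi n.-2 alpha lam)
  /\ (forall (n : nat) (lam : R), (1 <= n)%N ->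
     chi n alpha lam%:C =
       ((a%:C + 'i) * (lam%:C - 'i) ^+ n - (a%:C - 'i) * (lam%:C + 'i) ^+ n)
         / (2 * 'i)
     /\ chi n alpha lam%:C = (complex.Im ((a%:C + 'i) * (lam%:C - 'i) ^+ n))%:C)
  /\ (forall (n : nat) (lam : R[i]), (1 <= n)%N ->
     chi n alpha lam =
       \prod_(k < n) (lam - (cot ((alpha + k%:R * pi) / n%:R))%:C)).
Proof.
move=> a w; have wJ : Num.conj w = a%:C - 'i.
  by apply/eqP; rewrite eq_complex /= !oppr0 !addr0 !add0r !eqxx.
split; [|split].
- by case=> [|[|n]] lam // _; rewrite chiSS wJ /w /=; ring.
- by move=> n lam _; split; [exact: chiE | exact: chi_real].
- by move=> n lam n_gt0; apply: chi_prod.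
Qed.
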